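(* For every $n\in\mathbb N$, the class $\mathcal T_n$ contains only finitely many isomorphism types, i.e. $\mathcal T_n/\cong$ is a finite set.
   Context: A partial monounary algebra is a pair $(A,f)$ with $A$ a nonempty set and $f$ a partial unary operation on $A$. It is connected if for all $x,y\in A$ there are $m,n\ge0$ with $f^m(x),f^n(y)$ defined and equal. $\mathcal T$ is the class of connected partial monounary algebras $(A,f)$ with exactly one element not in the domain of $f$; this element is denoted $c_A$. For $x\in A$: $f^{-1}(x)=\{y\in\mathrm{dom}f:f(y)=x\}$, $f^{-n}(x)=\bigcup_{z\in f^{-(n-1)}(x)}f^{-1}(z)$, $P(x)=\{x\}\cup\bigcup_{n\ge1}f^{-n}(x)$, regarded as a partial monounary algebra with $f$ restricted to those $y\in P(x)$ with $f(y)$ defined and in $P(x)$. Condition ($\bigstar$): whenever $x_1,x_2,x_3\in A$ with $f(x_1)=f(x_2)=f(x_3)$ and $P(x_1),P(x_2),P(x_3)$ pairwise isomorphic, then $|\{x_1,x_2,x_3\}|\le2$; $\mathcal T^\bigstar$ is the class of members of $\mathcal T$ satisfying ($\bigstar$). Degree: $A^{(\infty)}$ is the set of $x$ admitting $x_0=x,x_1,\dots$ with $x_n\in\mathrm{dom}f$, $f(x_n)=x_{n-1}$ for $n\ge1$; for ordinals $\lambda$, $A^{(\lambda)}=\{x\in A\setminus\bigcup_{\alpha<\lambda}A^{(\alpha)}: f^{-1}(x)\subseteq\bigcup_{\alpha<\lambda}A^{(\alpha)}\}$; $s_f(x)$ is the $\lambda$ with $x\in A^{(\lambda)}$, or $\infty$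 if $x\in A^{(\infty)}$ ($\infty$ exceeds all ordinals). For an ordinal $\beta$, $\mathcal T_\beta=\{(A,f)\in\mathcal T^\bigstar: 0<s_f(c_A)\le\beta\}$. *)

From Stdlib Require Import List Arith.

(* A partial monounary algebra: a carrier with a partial unary operation,
   encoded as a total map into [option]; [op x = None] means x is not in dom f. *)
Record pma : Type := Pma { car : Type ; op : car -> option car }.

Section PMA.
Variable A : pma.
Notation T := (car A).
Notation f := (op A).

Fixpoint fiter (m : nat) (x : T) : option T :=
  match m with
  | 0 => Some x
  | S m' => match fiter m' x with Some y => f y | None => None end
  end.

Definition nonempty : Prop := exists x : T, True.

Definition connected : Prop :=
  forall x y : T, exists m n, exists z, fiter m x = Some z /\ fiter n y = Some z.

Definition in_T : Prop :=
  nonempty /\ connected /\ exists c : T, f c = None /\ forall x, f x = None -> x = c.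

Definition Pset (x : T) (y : T) : Prop := exists m, fiter m y = Some x.

(* degree: [below k x] means x ∈ ⋃_{j<k} A^(j); [level k x] means x ∈ A^(k) *)
Fixpoint below (k : nat) (x : T) : Prop :=
  match k with
  | 0 => False
  | S k' => below k' x \/ (~ below k' x /\ forall y, f y = Some x -> below k' y)
  end.

Definition level (k : nat) (x : T) : Prop :=
  ~ below k x /\ forall y, f y = Some x -> below k y.

End PMA.

(* Isomorphism between the partial monounary algebras induced on subsets
   S1 ⊆ car A1 and S2 ⊆ car A2 (the operation restricted to those y in S
   with f y defined and in S): a bijection g : S1 -> S2 (with inverse h)
   such that, for y z in S1, f1 y = z iff f2 (g y) = g z. *)
Definition iso_on (A1 : pma) (S1 : car A1 -> Prop) (A2 : pma) (S2 : car A2 -> Prop) : Prop :=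
  exists (g : car A1 -> car A2) (h : car A2 -> car A1),
    (forall x, S1 x -> S2 (g x)) /\ (forall y, S2 y -> S1 (h y)) /\
    (forall x, S1 x -> h (g x) = x) /\ (forall y, S2 y -> g (h y) = y) /\
    (forall y z, S1 y -> S1 z -> (op A1 y = Some z <-> op A2 (g y) = Some (g z))).

Definition iso (A1 A2 : pma) : Prop :=
  iso_on A1 (fun _ => True) A2 (fun _ => True).

Definition star (A : pma) : Prop :=
  forall x1 x2 x3 : car A,
    op A x1 <> None -> op A x1 = op A x2 -> op A x2 = op A x3 ->
    iso_on A (Pset A x1) A (Pset A x2) ->
    iso_on A (Pset A x1) A (Pset A x3) ->
    iso_on A (Pset A x2) A (Pset A x3) ->
    x1 = x2 \/ x1 = x3 \/ x2 = x3.

Definition in_Tn (n : nat) (A : pma) : Prop :=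
  in_T A /\ star A /\
  exists c : car A, op A c = None /\
    ~ level A 0 c /\ exists k, k <= n /\ level A k c.

(* Every element x of degree at most j is the root of the tree P(x), whose
   children are the predecessors of x, all of degree below j.  By induction on j
   there are finitely many isomorphism types of such trees: if the types for
   degree below j form a list C, then by (★) each node has at most two children
   of each type in C, so the children can be labelled injectively by numbers
   below 2|C|.  Recording for every y in P(x) the labels along the path from y
   to x embeds P(x) as a set of words of length at most j over 2|C| letters,
   ordered by "drop the first letter", and there are finitely many such sets.
   An algebra in T_n is the tree P(c_A) of its root, which has degree at most n. *)
From Stdlib Require Import List Arith Lia Classical ClassicalEpsilon ProofIrrelevance.
Import ListNotations.

Lemma fiter_Sr (A : pma) m (y : car A) :
  fiter A (S m) y = match op A y with Some z => fiter A m z | None => None end.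
Proof.
  induction m; simpl.
  - destruct (op A y); reflexivity.
  - simpl in IHm. rewrite IHm. destruct (op A y); reflexivity.
Qed.

Lemma fiter_add (A : pma) a b (y : car A) :
  fiter A (a + b) y = match fiter A a y with Some w => fiter A b w | None => None end.
Proof.
  revert y; induction a; intro y.
  - reflexivity.
  - rewrite Nat.add_succ_l, !fiter_Sr. destruct (op A y); [apply IHa | reflexivity].
Qed.

Lemma Pset_inv (A : pma) (x y : car A) :
  Pset A x y -> y = x \/ exists z, op A y = Some z /\ Pset A x z.
Proof.
  intros [[|m] Hm].
  - left. simpl in Hm. congruence.
  - rewrite fiter_Sr in Hm. destruct (op A y) as [z|]; [|discriminate].
    right. exists z. split; [reflexivity | exists m; exact Hm].
Qed.

Lemma Pset_induction (A : pma) (x : car A) (P : car A -> Prop) :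
  P x -> (forall y z, op A y = Some z -> Pset A x z -> P z -> P y) ->
  forall y, Pset A x y -> P y.
Proof.
  intros Hx Hstep y [m Hm]. revert y Hm. induction m as [|m IH]; intros y Hm.
  - simpl in Hm. injection Hm as ->. exact Hx.
  - rewrite fiter_Sr in Hm. destruct (op A y) as [z|] eqn:Ez; [|discriminate].
    apply (Hstep y z Ez); [exists m; exact Hm | exact (IH z Hm)].
Qed.

Lemma connected_Pset_root (A : pma) (c : car A) :
  connected A -> op A c = None -> forall y, Pset A c y.
Proof.
  intros Hconn Hc y. destruct (Hconn y c) as [m1 [[|m2] [z [H1 H2]]]].
  - exists m1. simpl in H2. congruence.
  - rewrite fiter_Sr, Hc in H2. discriminate.
Qed.

Lemma below_mono (A : pma) k k' (x : car A) : k <= k' -> below A k x -> below A k' x.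
Proof. induction 1; intros; [assumption | simpl; left; auto]. Qed.

Lemma below_pred (A : pma) k (x y : car A) :
  below A (S k) x -> op A y = Some x -> below A k y.
Proof.
  revert x y; induction k; intros x y Hb Hy.
  - destruct Hb as [[] | [_ H]]. exact (H y Hy).
  - destruct Hb as [Hb | [_ H]].
    + left. exact (IHk x y Hb Hy).
    + exact (H y Hy).
Qed.

Lemma below_fiter (A : pma) m k (y x : car A) :
  fiter A m y = Some x -> below A k x -> m < k /\ below A (k - m) y.
Proof.
  revert k x. induction m; intros k x H Hb.
  - simpl in H. injection H as ->. destruct k; [contradiction|].
    rewrite Nat.sub_0_r. split; [lia | exact Hb].
  - simpl in H. destruct (fiter A m y) as [w|] eqn:E in H; [|discriminate].
    destruct k as [|k]; [contradiction|].
    destruct (IHm k w E (below_pred A k x w Hb H)) as [H1 H2].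
    replace (S k - S m) with (k - m) by lia. split; [lia | exact H2].
Qed.

Lemma below_Pset_pred (A : pma) j (x y z : car A) :
  below A (S j) x -> op A y = Some z -> Pset A x z -> below A j y.
Proof.
  intros Hx Hyz [m Hz].
  assert (Hf : fiter A (S m) y = Some x) by (rewrite fiter_Sr, Hyz; exact Hz).
  destruct (below_fiter A (S m) (S j) y x Hf Hx) as [_ Hy].
  apply (below_mono A (S j - S m)); [lia | exact Hy].
Qed.

Lemma below_acyclic (A : pma) k (x : car A) d :
  below A k x -> fiter A (S d) x <> Some x.
Proof.
  revert x. induction k as [k IH] using (well_founded_induction lt_wf). intros x Hb H.
  destruct (below_fiter A (S d) k x x H Hb) as [Hlt Hb'].
  exact (IH (k - S d) ltac:(lia) x Hb' H).
Qed.

Lemma below_fiter_inj (A : pma) k (x y : car A) m m' :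
  below A k x -> fiter A m y = Some x -> fiter A m' y = Some x -> m = m'.
Proof.
  intros Hb H1 H2. destruct (lt_eq_lt_dec m m') as [[Hl | He] | Hl]; auto; exfalso.
  - replace m' with (m + S (m' - m - 1)) in H2 by lia. rewrite fiter_add, H1 in H2.
    exact (below_acyclic A k x _ Hb H2).
  - replace m with (m' + S (m - m' - 1)) in H1 by lia. rewrite fiter_add, H2 in H1.
    exact (below_acyclic A k x _ Hb H1).
Qed.

Lemma iso_on_sym A1 S1 A2 S2 : iso_on A1 S1 A2 S2 -> iso_on A2 S2 A1 S1.
Proof.
  intros (g & h & Hg & Hh & Hhg & Hgh & Hop).
  exists h, g. do 4 (split; [assumption|]).
  intros y z Hy Hz. split; intros Hyz.
  - apply (Hop (h y) (h z)); auto. rewrite !Hgh by assumption. exact Hyz.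
  - rewrite <- (Hgh y), <- (Hgh z) by assumption. apply Hop; auto.
Qed.

Lemma iso_on_trans A1 S1 A2 S2 A3 S3 :
  iso_on A1 S1 A2 S2 -> iso_on A2 S2 A3 S3 -> iso_on A1 S1 A3 S3.
Proof.
  intros (g & h & Hg & Hh & Hhg & Hgh & Hop) (g' & h' & Hg' & Hh' & Hhg' & Hgh' & Hop').
  exists (fun x => g' (g x)), (fun y => h (h' y)).
  split; [auto|]. split; [auto|].
  split; [intros x Hx; rewrite Hhg'; auto|]. split; [intros y Hy; rewrite Hgh; auto|].
  intros y z Hy Hz. rewrite Hop by assumption. apply Hop'; auto.
Qed.

Lemma iso_on_full A1 S1 A2 S2 :
  (forall x, S1 x) -> (forall y, S2 y) -> iso_on A1 S1 A2 S2 -> iso A1 A2.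
Proof.
  intros H1 H2 (g & h & Hg & Hh & Hhg & Hgh & Hop).
  exists g, h. do 2 (split; [auto|]). split; [auto|]. split; [auto|].
  intros y z _ _. apply Hop; auto.
Qed.

Definition trie_car (s : list (list nat)) : Type := {w : list nat | In w s}.

Definition trie_op (s : list (list nat)) (q : trie_car s) : option (trie_car s) :=
  match q with
  | exist _ [] _ => None
  | exist _ (_ :: w) _ =>
      match in_dec (list_eq_dec Nat.eq_dec) w s with
      | left H => Some (exist _ w H)
      | right _ => None
      end
  end.

Definition trie (s : list (list nat)) : pma := Pma (trie_car s) (trie_op s).

Lemma trie_car_eq s (q1 q2 : trie_car s) : proj1_sig q1 = proj1_sig q2 -> q1 = q2.
Proof.
  destruct q1 as [w1 H1], q2 as [w2 H2]; simpl; intros <-.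
  f_equal; apply proof_irrelevance.
Qed.

Lemma trie_op_Some s (q q' : trie_car s) :
  trie_op s q = Some q' -> exists a, proj1_sig q = a :: proj1_sig q'.
Proof.
  destruct q as [[|a w] H]; simpl; [discriminate|].
  destruct in_dec; [|discriminate]. intros E. injection E as <-. exists a; reflexivity.
Qed.

Lemma trie_op_cons s (q : trie_car s) a w :
  proj1_sig q = a :: w -> In w s -> exists q', trie_op s q = Some q' /\ proj1_sig q' = w.
Proof.
  destruct q as [p H]; simpl; intros -> Hw.
  destruct (in_dec (list_eq_dec Nat.eq_dec) w s); [eexists; split; reflexivity | contradiction].
Qed.

Fixpoint words (len K : nat) : list (list nat) :=
  match len with
  | 0 => [[]]
  | S l => [] :: flat_map (fun a => map (cons a) (words l K)) (seq 0 K)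
  end.

Lemma words_complete w len K :
  length w <= len -> Forall (fun a => a < K) w -> In w (words len K).
Proof.
  revert len. induction w as [|a w IH]; intros len Hl HF.
  - destruct len; simpl; auto.
  - destruct len as [|len]; simpl in Hl; [lia|]. inversion HF; subst. right.
    apply in_flat_map. exists a. split; [apply in_seq; lia|].
    apply in_map, IH; auto. lia.
Qed.

Fixpoint powerset {X} (l : list X) : list (list X) :=
  match l with [] => [[]] | a :: l' => powerset l' ++ map (cons a) (powerset l') end.

Lemma powerset_complete {X} (l : list X) (Q : X -> Prop) :
  (forall p, Q p -> In p l) -> exists s, In s (powerset l) /\ forall p, In p s <-> Q p.
Proof.
  revert Q; induction l as [|a l IH]; intros Q HQ.
  - exists []. split; [left; reflexivity|].
    intros p; split; [intros [] | intros Hp; destruct (HQ p Hp)].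
  - destruct (IH (fun p => Q p /\ p <> a)) as [s [Hs Hiff]].
    { intros p [Hp Hne]. destruct (HQ p Hp) as [E | H]; [congruence | exact H]. }
    destruct (classic (Q a)) as [Ha | Ha].
    + exists (a :: s). split; [apply in_or_app; right; apply in_map; exact Hs|].
      intros p; split.
      * intros [<- | H]; [exact Ha | apply Hiff; exact H].
      * intros Hp. destruct (classic (p = a)) as [-> | Hne]; [left | right; apply Hiff]; auto.
    + exists s. split; [apply in_or_app; left; exact Hs|].
      intros p; rewrite Hiff; split; [tauto|]. intros Hp; split; congruence.
Qed.

(* A labelling of the predecessors of x that is bounded and injective on
   siblings identifies every y in P(x) by the word [code y] of labels read along
   the path from y to x; this makes P(x) a sub-forest of a trie. *)
Section Coding.

Variables (A : pma) (j K : nat) (x : car A) (idx : car A -> nat).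

Hypothesis x_below : below A (S j) x.
Hypothesis idx_lt : forall y z, op A y = Some z -> Pset A x z -> idx y < K.
Hypothesis idx_sibling_inj : forall y1 y2 z,
  op A y1 = Some z -> op A y2 = Some z -> Pset A x z -> idx y1 = idx y2 -> y1 = y2.

Definition depth (y : car A) : nat := epsilon (inhabits 0) (fun m => fiter A m y = Some x).

Fixpoint labels (m : nat) (y : car A) : list nat :=
  match m with
  | 0 => []
  | S m' => idx y :: match op A y with Some z => labels m' z | None => [] end
  end.

Lemma labels_length m y : length (labels m y) <= m.
Proof.
  revert y. induction m as [|m IH]; intros y; simpl; [lia|].
  destruct (op A y) as [z|]; simpl; [specialize (IH z)|]; lia.
Qed.

Definition code (y : car A) : list nat := labels (depth y) y.

Lemma depth_spec y : Pset A x y -> fiter A (depth y) y = Some x.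
Proof. intros Hy. exact (epsilon_spec _ _ Hy). Qed.

Lemma depth_eq y m : fiter A m y = Some x -> depth y = m.
Proof.
  intros Hm. apply (below_fiter_inj A (S j) x y); [exact x_below | | exact Hm].
  apply depth_spec. exists m; exact Hm.
Qed.

Lemma code_root : code x = [].
Proof. unfold code. rewrite (depth_eq x 0 eq_refl). reflexivity. Qed.

Lemma code_pred y z : op A y = Some z -> Pset A x z -> code y = idx y :: code z.
Proof.
  intros Hyz Hz. unfold code.
  rewrite (depth_eq y (S (depth z))) by (rewrite fiter_Sr, Hyz; exact (depth_spec z Hz)).
  simpl. rewrite Hyz. reflexivity.
Qed.

Lemma code_words y : Pset A x y -> In (code y) (words j K).
Proof.
  intros Hy. apply words_complete.
  - destruct (below_fiter A (depth y) (S j) y x (depth_spec y Hy) x_below).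
    pose proof (labels_length (depth y) y). unfold code. lia.
  - revert y Hy. apply Pset_induction; [rewrite code_root; constructor|].
    intros y z Hyz Hz IH. rewrite (code_pred y z Hyz Hz).
    constructor; [exact (idx_lt y z Hyz Hz) | exact IH].
Qed.

Lemma code_inj y1 y2 : Pset A x y1 -> Pset A x y2 -> code y1 = code y2 -> y1 = y2.
Proof.
  intros Hy1. revert y1 Hy1 y2.
  apply (Pset_induction A x (fun y1 => forall y2, Pset A x y2 -> code y1 = code y2 -> y1 = y2)).
  - intros y2 Hy2 Hc. destruct (Pset_inv A x y2 Hy2) as [-> | [z2 [Hyz2 Hz2]]]; [reflexivity|].
    rewrite code_root, (code_pred y2 z2 Hyz2 Hz2) in Hc. discriminate.
  - intros y1 z1 Hyz1 Hz1 IH y2 Hy2 Hc.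
    rewrite (code_pred y1 z1 Hyz1 Hz1) in Hc.
    destruct (Pset_inv A x y2 Hy2) as [-> | [z2 [Hyz2 Hz2]]].
    + rewrite code_root in Hc. discriminate.
    + rewrite (code_pred y2 z2 Hyz2 Hz2) in Hc. injection Hc as Hidx Hcz.
      destruct (IH z2 Hz2 Hcz).
      exact (idx_sibling_inj y1 y2 z1 Hyz1 Hyz2 Hz1 Hidx).
Qed.

Lemma Pset_iso_trie (s : list (list nat)) :
  (forall w, In w s <-> exists y, Pset A x y /\ code y = w) ->
  iso_on A (Pset A x) (trie s) (fun _ => True).
Proof.
  intros Hs.
  assert (Hin : forall y, Pset A x y -> In (code y) s) by (intros y Hy; apply Hs; eauto).
  assert (Hroot : In [] s) by (rewrite <- code_root; apply Hin; exists 0; reflexivity).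
  assert (Hg : exists g : car A -> trie_car s, forall y, Pset A x y -> proj1_sig (g y) = code y).
  { exists (fun y => match excluded_middle_informative (In (code y) s) with
                     | left H => exist _ (code y) H | right _ => exist _ [] Hroot end).
    intros y Hy. destruct excluded_middle_informative as [H | H]; [reflexivity|].
    exfalso. exact (H (Hin y Hy)). }
  destruct Hg as [g Hg].
  assert (Hh : exists h : trie_car s -> car A,
            forall q, Pset A x (h q) /\ code (h q) = proj1_sig q).
  { exists (fun q => epsilon (inhabits x) (fun y => Pset A x y /\ code y = proj1_sig q)).
    intros q. apply epsilon_spec, Hs, proj2_sig. }
  destruct Hh as [h Hh].
  exists g, h. split; [auto|]. split; [intros q _; apply Hh|].
  split.
  { intros y Hy. destruct (Hh (g y)) as [Hhy Hc].
    apply code_inj; [exact Hhy | exact Hy | rewrite Hc; apply Hg; exact Hy]. }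
  split.
  { intros q _. apply trie_car_eq. rewrite (Hg (h q) (proj1 (Hh q))). apply Hh. }
  intros y z Hy Hz. simpl. split; intros Hyz.
  - destruct (trie_op_cons s (g y) (idx y) (code z)) as [q' [Hq' Hq'z]].
    + rewrite Hg by assumption. apply code_pred; assumption.
    + apply Hin; assumption.
    + rewrite Hq'. f_equal. apply trie_car_eq. rewrite Hq'z, Hg by assumption. reflexivity.
  - destruct (trie_op_Some s _ _ Hyz) as [a Ha].
    rewrite (Hg y Hy), (Hg z Hz) in Ha.
    destruct (Pset_inv A x y Hy) as [-> | [w [Hyw Hw]]].
    + rewrite code_root in Ha. discriminate.
    + rewrite (code_pred y w Hyw Hw) in Ha. injection Ha as _ Ha.
      rewrite Hyw. f_equal. exact (code_inj w z Hw Hz Ha).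
Qed.

Lemma Pset_iso_trie_words :
  exists s, In s (powerset (words j K)) /\ iso_on A (Pset A x) (trie s) (fun _ => True).
Proof.
  destruct (powerset_complete (words j K) (fun w => exists y, Pset A x y /\ code y = w))
    as [s [Hs Hiff]].
  { intros w [y [Hy <-]]. exact (code_words y Hy). }
  exists s. split; [exact Hs | exact (Pset_iso_trie s Hiff)].
Qed.

End Coding.

Lemma at_most_two_labelling (X Y : Type) (D : X -> Prop) (key : X -> Y) (cls : X -> nat) N :
  (forall a, D a -> cls a < N) ->
  (forall a b c, D a -> D b -> D c -> key a = key b -> key a = key c ->
     cls a = cls b -> cls a = cls c -> a = b \/ a = c \/ b = c) ->
  exists idx : X -> nat, (forall a, D a -> idx a < 2 * N) /\
    (forall a b, D a -> D b -> key a = key b -> idx a = idx b -> a = b).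
Proof.
  intros Hcls Htwo. destruct (classic (inhabited X)) as [HX | HX].
  2: { exists (fun _ => 0). split; intros a; destruct (HX (inhabits a)). }
  (* Within each key and class, a chosen representative gets the even label,
     the (at most one) other element the odd label. *)
  set (rep k i := epsilon HX (fun r => D r /\ key r = k /\ cls r = i)).
  exists (fun a => 2 * cls a + if excluded_middle_informative (a = rep (key a) (cls a)) then 0 else 1).
  split.
  - intros a Ha. specialize (Hcls a Ha). destruct excluded_middle_informative; lia.
  - intros a b Ha Hb Hkey Hidx.
    assert (Hc : cls a = cls b) by (do 2 destruct excluded_middle_informative; lia).
    rewrite <- Hkey, <- Hc in Hidx.
    assert (Hr : D (rep (key a) (cls a)) /\ key (rep (key a) (cls a)) = key a
                 /\ cls (rep (key a) (cls a)) = cls a) by (apply epsilon_spec; eauto).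
    destruct Hr as (Hr & Hkr & Hcr).
    destruct (excluded_middle_informative (a = rep (key a) (cls a))) as [Ea | Ea],
             (excluded_middle_informative (b = rep (key a) (cls a))) as [Eb | Eb];
      try lia; [congruence|].
    destruct (Htwo a b _ Ha Hb Hr Hkey (eq_sym Hkr) Hc (eq_sym Hcr)) as [E | [E | E]];
      [exact E | contradiction | contradiction].
Qed.

Definition Pset_classified (j : nat) (C : list pma) : Prop :=
  forall A, star A -> forall x : car A, below A j x ->
    exists B, In B C /\ iso_on A (Pset A x) B (fun _ => True).

Lemma classified_index j C (A : pma) :
  Pset_classified j C -> star A ->
  exists cls : car A -> nat, forall z, below A j z ->
    exists B, nth_error C (cls z) = Some B /\ iso_on A (Pset A z) B (fun _ => True).
Proof.
  intros HC Hstar.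
  exists (fun z => epsilon (inhabits 0) (fun i =>
            exists B, nth_error C i = Some B /\ iso_on A (Pset A z) B (fun _ => True))).
  intros z Hz. apply epsilon_spec.
  destruct (HC A Hstar z Hz) as [B [HB Hiso]].
  destruct (In_nth_error C B HB) as [i Hi]. eauto.
Qed.

Lemma star_labelling j C (A : pma) :
  Pset_classified j C -> star A ->
  exists idx : car A -> nat,
    (forall z, below A j z -> op A z <> None -> idx z < 2 * length C) /\
    (forall y1 y2, below A j y1 -> op A y1 <> None -> below A j y2 -> op A y2 <> None ->
       op A y1 = op A y2 -> idx y1 = idx y2 -> y1 = y2).
Proof.
  intros HC Hstar. destruct (classified_index j C A HC Hstar) as [cls Hcls].
  destruct (at_most_two_labelling (car A) (option (car A))
              (fun z => below A j z /\ op A z <> None) (op A) cls (length C))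
    as [idx [Hlt Hinj]].
  - intros z [Hz _]. destruct (Hcls z Hz) as [B [HB _]].
    apply nth_error_Some. congruence.
  - intros a b c [Ha Hfa] [Hb _] [Hc _] Hab Hac Hcab Hcac.
    destruct (Hcls a Ha) as [Ba [HBa Ia]], (Hcls b Hb) as [Bb [HBb Ib]],
             (Hcls c Hc) as [Bc [HBc Ic]].
    rewrite Hcab in HBa. rewrite <- Hcab, Hcac in HBa.
    assert (Ba = Bb) by congruence. assert (Bc = Bb) by congruence. subst Ba Bc.
    apply Hstar; try congruence;
      eapply iso_on_trans; (apply iso_on_sym; eassumption) || eassumption.
  - exists idx. split.
    + intros z Hz Hfz. apply Hlt. tauto.
    + intros y1 y2 H1 Hf1 H2 Hf2. apply Hinj; tauto.
Qed.

Lemma classified_succ j C :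
  Pset_classified j C ->
  Pset_classified (S j) (map trie (powerset (words j (2 * length C)))).
Proof.
  intros HC A Hstar x Hx.
  destruct (star_labelling j C A HC Hstar) as [idx [Hlt Hinj]].
  destruct (Pset_iso_trie_words A j (2 * length C) x idx Hx) as [s [Hs Hiso]].
  - intros y z Hyz Hz. apply Hlt; [exact (below_Pset_pred A j x y z Hx Hyz Hz) | congruence].
  - intros y1 y2 z Hyz1 Hyz2 Hz. apply Hinj; try congruence;
      eapply below_Pset_pred; eassumption.
  - exists (trie s). split; [apply in_map; exact Hs | exact Hiso].
Qed.

Fixpoint tree_types (j : nat) : list pma :=
  match j with
  | 0 => []
  | S j' => map trie (powerset (words j' (2 * length (tree_types j'))))
  end.

Lemma tree_types_classified j : Pset_classified j (tree_types j).
Proof.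
  induction j as [|j IH].
  - intros A _ x [].
  - exact (classified_succ j _ IH).
Qed.

Lemma choose_representatives (P : pma -> Prop) (R : pma -> pma -> Prop) (C : list pma) :
  exists L, (forall B, In B L -> P B) /\
    (forall B, In B C -> (exists A, P A /\ R A B) -> exists A, In A L /\ R A B).
Proof.
  induction C as [|B0 C IH].
  - exists []. split; intros B [].
  - destruct IH as [L [HLP HLR]].
    destruct (classic (exists A, P A /\ R A B0)) as [[A0 [HA0 HR0]] | Hnone].
    + exists (A0 :: L). split.
      * intros B [<- | HB]; auto.
      * intros B [<- | HB] Hex; [exists A0; split; [left |]; auto|].
        destruct (HLR B HB Hex) as [A [HA HR]]. exists A. split; [right |]; auto.
    + exists L. split; [exact HLP|].
      intros B [<- | HB] Hex; [contradiction | exact (HLR B HB Hex)].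
Qed.

Theorem lemma3p1 (n : nat) :
  exists L : list pma,
    (forall B, In B L -> in_Tn n B) /\
    (forall A : pma, in_Tn n A -> exists B, In B L /\ iso A B).
Proof.
  destruct (choose_representatives (in_Tn n) iso (tree_types (S n))) as [L [HLT HLiso]].
  exists L. split; [exact HLT|].
  intros A HA.
  pose proof HA as [[_ [Hconn _]] [Hstar [c [Hc [_ [k [Hk Hlev]]]]]]].
  assert (Hbelow : below A (S n) c) by (apply (below_mono A (S k)); [lia | right; exact Hlev]).
  destruct (tree_types_classified (S n) A Hstar c Hbelow) as [B [HB Hiso]].
  assert (HAB : iso A B).
  { apply (iso_on_full _ _ _ _ (connected_Pset_root A c Hconn Hc) (fun _ => I) Hiso). }
  destruct (HLiso B HB (ex_intro _ A (conj HA HAB))) as [A' [HA'L HA'B]].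
  exists A'. split; [exact HA'L|].
  exact (iso_on_trans _ _ _ _ _ _ HAB (iso_on_sym _ _ _ _ HA'B)).
Qed.
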